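(* Given any $n$ binary sequences $\boldsymbol{\mu}: [n] \to \{0,1\}^k$, there is always an optimal solution of the AML problem (in either of its two equivalent versions) whose ancestral assignment has the form $\boldsymbol{\lambda} = \bar{\boldsymbol{\mu}}_f$ for some map $f: \{0,1\}^{[n]} \to \{0,1\}^{V-[n]}$, where $V$ is the vertex set of the tree of that solution.
   Context: $[n]=\{0,\ldots,n-1\}$; $\mathcal{T}_n$ is the set of trees whose $n$ leaves are labelled by $[n]$. AML, Version 1: given $\boldsymbol{\mu}$, find $T=(V,E)\in\mathcal{T}_n$, $\mathbf{p}:E\to[0,1/2]$ and $\boldsymbol{\lambda}:V\to\{0,1\}^k$ with $\lambda_v=\mu_v$ for all leaves $v\in[n]$, minimizing $-\log_2\prod_{e\in E}p_e^{d_e}(1-p_e)^{k-d_e}$, where $d_{u,v}=\|\lambda_u-\lambda_v\|_1$. AML, Version 2: find $T\in\mathcal{T}_n$ and such $\boldsymbol{\lambda}$ minimizing $\sum_{e\in E}H(d_e/k)$ with $H(p)=-p\log_2p-(1-p)\log_2(1-p)$ (obtained from Version 1 by setting $p_e=d_e/k$). For $1\le j\le k$, the $j$-th character of $\boldsymbol{\mu}$ is $\chi\in\{0,1\}^{[n]}$ with $\chi_u=(\mu_u)_j$. Given $f:\{0,1\}^{[n]}\to\{0,1\}^{V-[n]}$, the extension $\bar{\boldsymbol{\mu}}_f:V\to\{0,1\}^k$ is defined characterwise: for each character $\chi$ (the $j$-th), $(\bar\mu_f)_v$ has $j$-th coordinate $\chi_v$ if $v\in[n]$ and $f(\chi)_v$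 if $v\in V-[n]$. *)

From HB Require Import structures.
From mathcomp Require Import all_boot all_order all_algebra.
From mathcomp Require Import reals constructive_ereal exp.
Set Implicit Arguments. Unset Strict Implicit. Unset Printing Implicit Defensive.
Import Order.TTheory GRing.Theory Num.Theory.
Local Open Scope ring_scope.

(* Vertex set of a tree with n labelled leaves and m internal vertices:
   V = [n] (+) (internal vertices).  inl u is leaf u, inr w is internal w. *)
Definition vert (n m : nat) := ('I_n + 'I_m)%type.

(* a strict total order on vertices, used to list each undirected edge once *)
Definition vlt n m (x y : vert n m) : bool :=
  match x, y with
  | inl a, inl b => (a < b)%N
  | inl _, inr _ => true
  | inr _, inl _ => false
  | inr a, inr b => (a < b)%N
  end.

(* the undirected edge {x,y} of E, represented once as the ordered pair (x,y) with x < y *)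
Definition is_edge n m (E : rel (vert n m)) (e : vert n m * vert n m) : bool :=
  E e.1 e.2 && vlt e.1 e.2.

Definition deg n m (E : rel (vert n m)) (v : vert n m) : nat := #|[set w | E v w]|.

Definition leaf_labelled_tree n m (E : rel (vert n m)) : Prop :=
  [/\ (forall x y, E x y = E y x),
      (forall x, ~~ E x x),
      (forall x y, connect E x y),
      #|[set e | is_edge E e]| = (n + m).-1
    & (forall u : 'I_n, deg E (inl u) <= 1)%N /\ (forall w : 'I_m, 1 < deg E (inr w))%N].

Definition extends n m k (mu : 'I_n -> 'I_k -> bool) (lam : vert n m -> 'I_k -> bool) :=
  forall u j, lam (inl u) j = mu u j.

Definition hdist n m k (lam : vert n m -> 'I_k -> bool) (x y : vert n m) : nat :=
  (\sum_(j < k) (lam x j != lam y j))%N.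

Definition ext n m k (mu : 'I_n -> 'I_k -> bool)
  (f : {ffun 'I_n -> bool} -> {ffun 'I_m -> bool}) (v : vert n m) (j : 'I_k) : bool :=
  match v with
  | inl u => mu u j
  | inr w => f [ffun u => mu u j] w
  end.

Section Costs.
Variable R : realType.

Definition log2 (x : R) : R := ln x / ln 2.

Definition xlog2x (x : R) : R := if x == 0 then 0 else x * log2 x.

Definition Hbin (p : R) : R := - xlog2x p - xlog2x (1 - p).

Definition cost2 n m k (E : rel (vert n m)) (lam : vert n m -> 'I_k -> bool) : R :=
  \sum_(e | is_edge E e) Hbin ((hdist lam e.1 e.2)%:R / k%:R).

Definition lik1 n m k (E : rel (vert n m)) (p : vert n m * vert n m -> R)
  (lam : vert n m -> 'I_k -> bool) : R :=
  \prod_(e | is_edge E e) (p e ^+ hdist lam e.1 e.2 * (1 - p e) ^+ (k - hdist lam e.1 e.2)).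

Definition cost1 n m k (E : rel (vert n m)) (p : vert n m * vert n m -> R)
  (lam : vert n m -> 'I_k -> bool) : \bar R :=
  let P := lik1 E p lam in
  if P == 0 then +oo%E else (- log2 P)%:E.

Definition valid_p n m (E : rel (vert n m)) (p : vert n m * vert n m -> R) : Prop :=
  forall e, is_edge E e -> 0 <= p e <= 2^-1.

End Costs.

From HB Require Import structures.
From mathcomp Require Import all_boot all_order all_algebra.
From mathcomp Require Import boolp reals constructive_ereal exp.
From mathcomp Require Import normedtype sequences.
From mathcomp Require Import ring lra zify.
Import Order.TTheory GRing.Theory Num.Theory.
Local Open Scope ring_scope.
Set Implicit Arguments. Unset Strict Implicit. Unset Printing Implicit Defensive.

(* The likelihood of an assignment is a product over the k characters, and the
   factor of a character only depends on the column it induces on the vertices.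
   Among the characters sharing a leaf pattern chi, copying the internal column
   of the best one into all of them cannot decrease the likelihood; this defines
   f chi.  For a fixed distance d on an edge, p^d (1-p)^(k-d) is maximal at
   p = d/k (at min(d/k, 1/2) under the constraint p <= 1/2), so both versions
   amount to maximising a product of weights h(d_e) <= 1 over all trees and
   assignments.  This maximum is attained, although trees may be arbitrarily
   large, because only boundedly many edges with h(d_e) < 1 fit above any
   positive value, and the other edges contribute the factor 1. *)

Lemma sum_nat_pred_card (I : finType) (b : pred I) : (\sum_i b i)%N = #|b|.
Proof.
by rewrite -sum1_card [RHS]big_mkcond; apply: eq_bigr => i _; rewrite unfold_in; case: (b i).
Qed.

Lemma card_predC_sub (I : finType) (b : pred I) : #|[predC b]| = (#|I| - #|b|)%N.
Proof. by rewrite -(cardC b) addKn. Qed.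

Lemma prodr_if_card (R : comPzSemiRingType) (I : finType) (b : pred I) (x y : R) :
  \prod_i (if b i then x else y) = x ^+ #|b| * y ^+ (#|I| - #|b|).
Proof.
rewrite (bigID b) /= -card_predC_sub.
rewrite (eq_bigr (fun=> x)) => [|i ->] //.
rewrite [X in _ * X](eq_bigr (fun=> y)) => [|i /negbTE ->] //.
by rewrite !prodr_const.
Qed.

Lemma sumr_if_card (V : nmodType) (I : finType) (b : pred I) (x y : V) :
  \sum_i (if b i then x else y) = x *+ #|b| + y *+ (#|I| - #|b|).
Proof.
rewrite (bigID b) /= -card_predC_sub.
rewrite (eq_bigr (fun=> x)) => [|i ->] //.
rewrite [X in _ + X](eq_bigr (fun=> y)) => [|i /negbTE ->] //.
by rewrite !sumr_const.
Qed.

Section CharacterwiseReduction.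
Variables (R : realType) (n m k : nat) (mu : 'I_n -> 'I_k -> bool).
Variables (E : rel (vert n m)) (p : vert n m * vert n m -> R).

Definition column_lik (c : vert n m -> bool) : R :=
  \prod_(e | is_edge E e) (if c e.1 != c e.2 then p e else 1 - p e).

Lemma lik1_columns lam : lik1 E p lam = \prod_(j < k) column_lik (fun v => lam v j).
Proof.
rewrite /lik1 /column_lik exchange_big /=; apply: eq_bigr => e _.
by rewrite prodr_if_card /hdist sum_nat_pred_card card_ord.
Qed.

Hypothesis p01 : forall e, is_edge E e -> 0 <= p e <= 1.

Lemma column_lik_ge0 c : 0 <= column_lik c.
Proof.
apply: prodr_ge0 => e /p01 /andP[p_ge0 p_le1].
by case: ifP; rewrite ?subr_ge0.
Qed.

Lemma lik1_le_ext lam : extends mu lam -> exists f, lik1 E p lam <= lik1 E p (ext mu f).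
Proof.
move=> lam_mu.
pose chi j : {ffun 'I_n -> bool} := [ffun u => mu u j].
pose col i v := lam v i.
pose best j := [arg max_(i > j | chi i == chi j) column_lik (col i)]%O.
pose f c := if [pick j | chi j == c] is Some j
            then [ffun w => lam (inr w) (best j)] else [ffun=> false].
exists f; rewrite !lik1_columns; apply: ler_prod => j _; rewrite column_lik_ge0 /=.
have [j' /eqP chi_j' f_j] :
    exists2 j', chi j' == chi j & f (chi j) = [ffun w => lam (inr w) (best j')].
  by rewrite /f; case: pickP => [j' ?|/(_ j)]; [exists j' | rewrite eqxx].
rewrite /best in f_j.
case: (@arg_maxP _ _ _ j' (fun i => chi i == chi j') (fun i => column_lik (col i)) (eqxx _)) f_j.
move=> i /eqP chi_i i_max f_j.
have -> : (fun v => ext mu f v j) = col i.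
  apply: funext => -[u|w] /=; last by rewrite -/(chi j) f_j ffunE.
  rewrite /col lam_mu.
  by have := congr1 (fun g : {ffun 'I_n -> bool} => g u) (etrans chi_i chi_j'); rewrite !ffunE.
by apply: i_max; rewrite chi_j'.
Qed.

End CharacterwiseReduction.

Section Log2.
Variable R : realType.
Implicit Types x y : R.

Lemma log2_1 : log2 (1 : R) = 0.
Proof. by rewrite /log2 ln1 mul0r. Qed.

Lemma log2M x y : 0 < x -> 0 < y -> log2 (x * y) = log2 x + log2 y.
Proof. by move=> x_gt0 y_gt0; rewrite /log2 lnM ?posrE // mulrDl. Qed.

Lemma log2Xn x j : 0 < x -> log2 (x ^+ j) = log2 x *+ j.
Proof. by move=> x_gt0; rewrite /log2 lnXn // mulrnAl. Qed.

Lemma ler_log2 x y : 0 < x -> x <= y -> log2 x <= log2 y.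
Proof.
move=> x_gt0 xy; rewrite /log2 ler_pM2r ?invr_gt0 ?ln_gt0 ?ltr1n //.
by rewrite ler_ln ?posrE // (lt_le_trans x_gt0).
Qed.

Lemma log2_prod (I : finType) (P : pred I) (F : I -> R) :
  (forall i, P i -> 0 < F i) ->
  log2 (\prod_(i | P i) F i) = \sum_(i | P i) log2 (F i).
Proof.
move=> F_gt0.
have [_ ->] // : 0 < \prod_(i | P i) F i /\
                 log2 (\prod_(i | P i) F i) = \sum_(i | P i) log2 (F i).
apply: (big_rec2 (fun x y => 0 < x /\ log2 x = y)) => [|i x y Pi [x_gt0 <-]].
  by rewrite ltr01 log2_1.
by rewrite mulr_gt0 ?F_gt0 // log2M ?F_gt0.
Qed.

End Log2.

Lemma card_ord_lt k d : #|[pred i : 'I_k | (i < d)%N]| = minn d k.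
Proof.
rewrite -sum_nat_pred_card; elim: k => [|k IHk]; first by rewrite big_ord0 minn0.
by rewrite big_ord_recr /= IHk; case: ltnP => /= ?; lia.
Qed.

Section BinomialLikelihood.
Variables (R : realType) (k : nat).

Definition edge_lik (q : R) (d : nat) : R := q ^+ d * (1 - q) ^+ (k - d).

Lemma edge_lik_ge0 q d : 0 <= q <= 1 -> 0 <= edge_lik q d.
Proof. by move=> /andP[q_ge0 q_le1]; rewrite mulr_ge0 ?exprn_ge0 ?subr_ge0. Qed.

Lemma edge_lik_le1 q d : 0 <= q <= 1 -> edge_lik q d <= 1.
Proof.
move=> /andP[q_ge0 q_le1].
by rewrite mulr_ile1 ?exprn_ge0 ?exprn_ile1 ?subr_ge0 // lerBlDr lerDl.
Qed.

Lemma edge_lik_gt0 q d : ((0 < d)%N -> 0 < q) -> ((d < k)%N -> q < 1) -> 0 < edge_lik q d.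
Proof.
move=> q_gt0 q_lt1; apply: mulr_gt0.
  by case: (posnP d) => [->|/q_gt0 /exprn_gt0 //]; rewrite expr0.
case: (ltnP d k) => [/q_lt1 ?|kd]; first by rewrite exprn_gt0 ?subr_gt0.
by have -> : (k - d = 0)%N by lia.
Qed.

Definition freq (d : nat) : R := d%:R / k%:R.

Definition capped_freq (d : nat) : R := if (d.*2 <= k)%N then freq d else 2^-1.

Hypothesis k_gt0 : (0 < k)%N.

Lemma freq_gt0 d : (0 < d)%N -> 0 < freq d.
Proof. by move=> d_gt0; rewrite divr_gt0 ?ltr0n. Qed.

Lemma freq_range d : (d <= k)%N -> 0 <= freq d <= 1.
Proof. by move=> dk; rewrite divr_ge0 ?ler0n //= ler_pdivrMr ?ltr0n // mul1r ler_nat. Qed.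

Lemma freq_lt1 d : (d < k)%N -> freq d < 1.
Proof. by move=> dk; rewrite ltr_pdivrMr ?ltr0n // mul1r ltr_nat. Qed.

Lemma capped_freq_range d : 0 <= capped_freq d <= 2^-1.
Proof.
rewrite /capped_freq; case: ifP => [d2k|_]; last by rewrite lexx invr_ge0 ler0n.
rewrite /freq divr_ge0 ?ler0n //= ler_pdivrMr ?ltr0n //.
have : (d.*2)%:R <= k%:R :> R by rewrite ler_nat.
rewrite -muln2 natrM; lra.
Qed.

Lemma edge_lik_le_freq p d : (d <= k)%N -> 0 <= p <= 1 -> edge_lik p d <= edge_lik (freq d) d.
Proof.
move=> dk /andP[p_ge0 p_le1].
have [->|d_gt0] := posnP d.
  rewrite /edge_lik /freq mul0r subr0 !expr0 !mul1r expr1n; apply: exprn_ile1; lra.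
case: ltngtP dk => // [d_lt_k _|-> _]; last first.
  by rewrite /edge_lik /freq divff ?pnatr_eq0 -?lt0n // subnn !expr0 !mulr1 expr1n exprn_ile1.
have q_gt0 := freq_gt0 d_gt0; have q_lt1 := freq_lt1 d_lt_k.
set q := freq d in q_gt0 q_lt1 *.
(* AM-GM for d copies of p/q and k-d copies of (1-p)/(1-q), whose mean is 1 *)
pose w (i : 'I_k) := if (i < d)%N then p / q else (1 - p) / (1 - q).
have w_ge0 : {in predT, forall i, 0 <= w i}.
  by move=> i _; rewrite /w; case: ifP => _; apply: divr_ge0; lra.
have := (leif_AGM w_ge0).1.
rewrite card_ord (eq_bigl xpredT) // [X in _ <= (X / _) ^+ _ -> _](eq_bigl xpredT) //.
rewrite /w (prodr_if_card [pred i : 'I_k | (i < d)%N]).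
rewrite (sumr_if_card [pred i : 'I_k | (i < d)%N]).
rewrite card_ord card_ord_lt (minn_idPl (ltnW d_lt_k)).
have -> : (p / q) *+ d + (1 - p) / (1 - q) *+ (k - d) = k%:R.
  rewrite /q /freq -[_ *+ d]mulr_natr -[_ *+ (k - d)]mulr_natr natrB ?(ltnW d_lt_k) //.
  have k_neq0 : k%:R != 0 :> R by rewrite pnatr_eq0 -lt0n.
  have kd_neq0 : k%:R - d%:R != 0 :> R.
    by rewrite -natrB ?(ltnW d_lt_k) // pnatr_eq0 subn_eq0 -ltnNge.
  have d_neq0 : d%:R != 0 :> R by rewrite pnatr_eq0 -lt0n.
  have -> : 1 - d%:R / k%:R = (k%:R - d%:R) / k%:R :> R by field.
  by field; rewrite d_neq0 k_neq0 kd_neq0.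
clearbody q; rewrite divff ?pnatr_eq0 -?lt0n // expr1n !expr_div_n mulf_div.
by rewrite ler_pdivrMr ?mulr_gt0 ?exprn_gt0 ?subr_gt0 // mul1r.
Qed.

Lemma edge_lik_le_capped_freq p d :
  (d <= k)%N -> 0 <= p <= 2^-1 -> edge_lik p d <= edge_lik (capped_freq d) d.
Proof.
move=> dk /andP[p_ge0 p_le_half].
have half_le1 : 2^-1 <= 1 :> R by rewrite invf_le1 ?ler1n.
rewrite /capped_freq; case: ifP => d2k.
  by apply: edge_lik_le_freq; rewrite // p_ge0 (le_trans p_le_half).
(* for d >= k - d, write p^d (1-p)^(k-d) = p^(2d-k) (p(1-p))^(k-d), increasing on [0,1/2] *)
rewrite /edge_lik; set e := (k - d)%N.
have -> : 1 - 2^-1 = 2^-1 :> R by field.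
have -> : d = (d - e + e)%N by rewrite subnK //; lia.
rewrite !exprD -!mulrA -!exprMn.
apply: ler_pM; rewrite ?exprn_ge0 ?mulr_ge0 ?subr_ge0 ?invr_ge0 ?ler0n //; try lra.
  by apply: lerXn2r; rewrite ?nnegrE ?invr_ge0 ?ler0n.
by apply: lerXn2r; rewrite ?nnegrE ?mulr_ge0 ?subr_ge0 ?invr_ge0 ?ler0n //; nra.
Qed.

Lemma edge_lik_freq_gt0 d : 0 < edge_lik (freq d) d.
Proof. by apply: edge_lik_gt0; [apply: freq_gt0 | apply: freq_lt1]. Qed.

Lemma edge_lik_capped_freq_gt0 d : 0 < edge_lik (capped_freq d) d.
Proof.
apply: edge_lik_gt0 => [d_gt0|_].
  by rewrite /capped_freq; case: ifP => _; rewrite ?freq_gt0 ?invr_gt0 ?ltr0n.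
have /andP[_ q_le_half] := capped_freq_range d.
by apply: le_lt_trans q_le_half _; rewrite invf_lt1 ?ltr1n.
Qed.

Lemma Hbin_freq d : (d <= k)%N -> Hbin (freq d) = - (k%:R^-1 * log2 (edge_lik (freq d) d)).
Proof.
move=> dk; have k_neq0 : k%:R != 0 :> R by rewrite pnatr_eq0 -lt0n.
rewrite /Hbin /xlog2x /edge_lik.
have [->|d_gt0] := posnP d.
  by rewrite /freq mul0r eqxx subr0 oner_eq0 expr0 expr1n mul1r log2_1 mul1r; lra.
case: ltngtP dk => // [d_lt_k _|-> _]; last first.
  by rewrite /freq divff // subrr oner_eq0 eqxx subnn !expr0 mulr1 expr1n log2_1 mul1r; lra.
have q_gt0 := freq_gt0 d_gt0; have q_lt1 := freq_lt1 d_lt_k.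
rewrite gt_eqF // gt_eqF ?subr_gt0 // log2M ?exprn_gt0 ?subr_gt0 // !log2Xn ?subr_gt0 //.
have e1 : 1 - freq d = (k - d)%:R / k%:R by rewrite /freq natrB ?(ltnW d_lt_k) //; field.
set L1 := log2 (freq d); set L2 := log2 (1 - freq d).
by rewrite e1 /freq -[L1 *+ _]mulr_natl -[L2 *+ _]mulr_natl; field.
Qed.

End BinomialLikelihood.

Section ProductOfPowersArgmax.
Variables (R : realType) (K : nat) (h : 'I_K -> R).
Hypothesis h_range : forall j, 0 < h j <= 1.

Definition prod_powers (c : 'I_K -> nat) : R := \prod_j h j ^+ c j.

Lemma prod_powers_gt0 c : 0 < prod_powers c.
Proof. by apply: prodr_gt0 => j _; rewrite exprn_gt0 //; case/andP: (h_range j). Qed.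

Lemma prod_powers_le_expr c j : prod_powers c <= h j ^+ c j.
Proof.
have /andP[/ltW h_ge0 _] := h_range j.
rewrite /prod_powers (bigD1 j) //= ler_piMr ?exprn_ge0 //.
apply: prodr_ile1 => i _; have /andP[/ltW hi_ge0 hi_le1] := h_range i.
by rewrite exprn_ge0 ?exprn_ile1.
Qed.

Lemma prod_powers_count_bounded v : 0 < v ->
  exists N, forall c j, v <= prod_powers c -> h j < 1 -> (c j <= N)%N.
Proof.
move=> v_gt0.
pose a := \big[Num.max/0]_(j | h j < 1) h j.
have a_ge0 : 0 <= a by rewrite /a; elim/big_rec: _ => // j x _ x_ge0; rewrite le_max x_ge0 orbT.
have a_lt1 : a < 1 by rewrite /a; elim/big_rec: _ => // j x h_lt1 x_lt1; rewrite gt_max h_lt1.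
have le_a j : h j < 1 -> h j <= a by move=> h_lt1; rewrite /a (bigD1 j) //= le_max lexx.
have : `|a| < 1 by rewrite ger0_norm.
move=> /cvg_expr /cvgr_lt /(_ v v_gt0) [N _ /(_ N (leqnn N)) /= aN_lt_v].
exists N => c j v_le h_lt1; rewrite leqNgt; apply/negP => /ltnW N_le_c.
have h_ge0 : 0 <= h j by case/andP: (h_range j) => /ltW.
have : h j ^+ c j <= a ^+ N.
  apply: (le_trans (y := a ^+ c j)); first by rewrite lerXn2r ?nnegrE ?le_a.
  by rewrite ler_wiXn2l // ltW.
have := prod_powers_le_expr c j; lra.
Qed.

Lemma prod_powers_argmax (S : ('I_K -> nat) -> Prop) : (exists c, S c) ->
  exists2 c, S c & forall c', S c' -> prod_powers c' <= prod_powers c.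
Proof.
move=> [c0 Sc0].
have [N bounded] := prod_powers_count_bounded (prod_powers_gt0 c0).
(* above the value at c0 only the counts with h j < 1 matter, and they are at most N *)
pose trunc c : {ffun 'I_K -> 'I_N.+1} := [ffun j => inord (if h j < 1 then c j else 0)].
pose tprod (t : {ffun 'I_K -> 'I_N.+1}) := prod_powers (fun j => t j).
have trunc_prod c : prod_powers c0 <= prod_powers c -> prod_powers c = tprod (trunc c).
  move=> c_ge; apply: eq_bigr => j _; rewrite ffunE.
  case: ifP => [h_lt1|/negbT]; first by rewrite inordK // ltnS bounded.
  case/andP: (h_range j) => _ h_le1; rewrite -leNgt => h_ge1.
  suff -> : h j = 1 by rewrite !expr1n.
  by apply/eqP; rewrite eq_le h_le1.
pose T t := `[< exists2 c, S c & prod_powers c0 <= prod_powers c /\ trunc c = t >].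
have T0 : T (trunc c0) by apply/asboolP; exists c0.
case: (arg_maxP tprod T0) => _ /asboolP [c Sc [c_ge <-]] c_max.
exists c => // c' Sc'.
have [c'_ge|/ltW c'_lt] := leP (prod_powers c0) (prod_powers c'); last exact: le_trans c'_lt c_ge.
by rewrite (trunc_prod c') // (trunc_prod c) //; apply: c_max; apply/asboolP; exists c'.
Qed.

End ProductOfPowersArgmax.

Lemma leaf_labelled_tree_single : @leaf_labelled_tree 1 0 (fun _ _ => false).
Proof.
have vE (x : vert 1 0) : x = inl ord0 by case: x => [u|[]] //; rewrite (ord1 u).
split => //.
- by move=> x y; rewrite (vE x) (vE y) connect0.
- by apply: eq_card0 => e; rewrite inE.
- by split=> [u|[]]; rewrite /deg (eq_card0 (A := mem [set w | false])) // => w; rewrite inE.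
Qed.

Definition star n : rel (vert n 1) := fun x y =>
  match x, y with inl _, inr _ | inr _, inl _ => true | _, _ => false end.
Arguments star : clear implicits.

Lemma leaf_labelled_tree_star n : (1 < n)%N -> leaf_labelled_tree (star n).
Proof.
move=> n_gt1.
have to_centre x : connect (star n) x (inr ord0).
  by case: x => [u|w]; [apply: connect1 | rewrite (ord1 w) connect0].
have from_centre y : connect (star n) (inr ord0) y.
  by case: y => [u|w]; [apply: connect1 | rewrite (ord1 w) connect0].
split.
- by case=> ? [].
- by case.
- by move=> x y; apply: connect_trans (to_centre x) (from_centre y).
- have -> : [set e | is_edge (star n) e] = [set (inl u, inr ord0) | u : 'I_n].
    apply/setP => -[[u|w] [u'|w']]; rewrite inE /is_edge /=; apply/esym/imsetP;
      try by case=> v _ [].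
    by exists u => //; rewrite (ord1 w').
  by rewrite card_imset ?card_ord ?addn1 // => u v [].
- split=> [u|w]; rewrite /deg.
  + have -> : [set w | star n (inl u) w] = [set inr ord0].
      by apply/setP => -[?|w]; rewrite !inE //= (ord1 w) eqxx.
    by rewrite cards1.
  + have -> : [set v | star n (inr w) v] = [set inl u | u : 'I_n].
      by apply/setP => -[u|w']; rewrite inE; apply/esym/imsetP; [exists u | case].
    by rewrite card_imset ?card_ord // => u v [].
Qed.

Lemma exists_leaf_labelled_tree n : (0 < n)%N ->
  exists m (E : rel (vert n m)), leaf_labelled_tree E.
Proof.
case: n => // -[_|n _]; first by exists 0%N, (fun _ _ => false); exact: leaf_labelled_tree_single.
by exists 1%N, (star n.+2); exact: leaf_labelled_tree_star.
Qed.

Lemma hdist_le n m k (lam : vert n m -> 'I_k -> bool) x y : (hdist lam x y <= k)%N.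
Proof. by rewrite /hdist sum_nat_pred_card -[leqRHS]card_ord max_card. Qed.

Lemma lik1_ge0 (R : realType) n m k (E : rel (vert n m)) (p : vert n m * vert n m -> R)
    (lam : vert n m -> 'I_k -> bool) :
  (forall e, is_edge E e -> 0 <= p e <= 1) -> 0 <= lik1 E p lam.
Proof. by move=> p_unit; apply: prodr_ge0 => e /p_unit; apply: edge_lik_ge0. Qed.

Section AncestralOptimum.
Variables (R : realType) (n k : nat) (mu : 'I_n -> 'I_k -> bool).
Variables (q : nat -> R) (P : pred R).
Hypothesis n_gt0 : (0 < n)%N.
Hypotheses (q_in : forall d, (d <= k)%N -> P (q d)) (P_unit : forall p, P p -> 0 <= p <= 1).
Hypothesis edge_lik_le_q : forall p d, (d <= k)%N -> P p -> edge_lik k p d <= edge_lik k (q d) d.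
Hypothesis edge_lik_q_gt0 : forall d, 0 < edge_lik k (q d) d.

Definition candidate m (E : rel (vert n m)) (lam : vert n m -> 'I_k -> bool) :=
  leaf_labelled_tree E /\ extends mu lam.

Definition profile_lik m (E : rel (vert n m)) (lam : vert n m -> 'I_k -> bool) : R :=
  \prod_(e | is_edge E e) edge_lik k (q (hdist lam e.1 e.2)) (hdist lam e.1 e.2).

Definition dist_count m (E : rel (vert n m)) (lam : vert n m -> 'I_k -> bool) (d : 'I_k.+1) :=
  #|[pred e | is_edge E e && (hdist lam e.1 e.2 == d)]|.

Lemma profile_lik_gt0 m (E : rel (vert n m)) lam : 0 < profile_lik E lam.
Proof. by apply: prodr_gt0 => e _; apply: edge_lik_q_gt0. Qed.

Lemma lik1_le_profile_lik m (E : rel (vert n m)) p lam :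
  (forall e, is_edge E e -> P (p e)) -> lik1 E p lam <= profile_lik E lam.
Proof.
move=> p_in; apply: ler_prod => e /p_in p_e.
by rewrite edge_lik_ge0 ?P_unit //= edge_lik_le_q ?hdist_le.
Qed.

Lemma profile_lik_prod_powers m (E : rel (vert n m)) lam :
  profile_lik E lam = prod_powers (fun d : 'I_k.+1 => edge_lik k (q d) d) (dist_count E lam).
Proof.
rewrite /profile_lik (partition_big (fun e => inord (hdist lam e.1 e.2) : 'I_k.+1) xpredT) //=.
apply: eq_bigr => d _; rewrite -prodr_const.
have inord_hdist e : (inord (hdist lam e.1 e.2) == d :> 'I_k.+1) = (hdist lam e.1 e.2 == d).
  by rewrite -(inj_eq val_inj) /= inordK // ltnS hdist_le.
by apply: eq_big => [e|e /andP[_]]; rewrite ?inord_hdist // => /eqP ->.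
Qed.

Lemma profile_lik_argmax : exists m (E : rel (vert n m)) lam, candidate E lam /\
  forall m' (E' : rel (vert n m')) lam',
    candidate E' lam' -> profile_lik E' lam' <= profile_lik E lam.
Proof.
pose S c := exists m (E : rel (vert n m)) lam, candidate E lam /\ c = dist_count E lam.
have h_range (d : 'I_k.+1) : 0 < edge_lik k (q d) d <= 1.
  have d_le_k : (d <= k)%N by rewrite -ltnS.
  by rewrite edge_lik_q_gt0 edge_lik_le1 // P_unit ?q_in.
have S0 : exists c, S c.
  have [m [E tree]] := exists_leaf_labelled_tree n_gt0.
  by exists (dist_count E (ext mu (fun=> [ffun=> false]))), m, E, (ext mu (fun=> [ffun=> false])).
have [_ [m [E [lam [cand ->]]]] c_max] := prod_powers_argmax h_range S0.
exists m, E, lam; split=> // m' E' lam' cand'.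
by rewrite !profile_lik_prod_powers; apply: c_max; exists m', E', lam'.
Qed.

Lemma ext_maximises_lik1 : exists m (E : rel (vert n m)) f, leaf_labelled_tree E /\
  forall m' (E' : rel (vert n m')) p' lam', candidate E' lam' ->
    (forall e, is_edge E' e -> P (p' e)) -> lik1 E' p' lam' <= profile_lik E (ext mu f).
Proof.
have [m [E [lam [[tree lam_mu] lam_max]]]] := profile_lik_argmax.
(* reduce lam under its own optimal rates, which bound the likelihood by the profile one *)
pose p e := q (hdist lam e.1 e.2).
have p_in e : P (p e) by apply/q_in/hdist_le.
have [f lik_f] := lik1_le_ext (E := E) (p := p) (fun e _ => P_unit (p_in e)) lam_mu.
exists m, E, f; split=> // m' E' p' lam' cand' p'_in.
apply: (le_trans (lik1_le_profile_lik lam' p'_in)); apply: (le_trans (lam_max _ _ _ cand')).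
by apply: (le_trans lik_f); apply: lik1_le_profile_lik.
Qed.

End AncestralOptimum.

Lemma le_cost1 (R : realType) n m m' k (E : rel (vert n m)) (E' : rel (vert n m'))
    (p : vert n m * vert n m -> R) (p' : vert n m' * vert n m' -> R)
    (lam : vert n m -> 'I_k -> bool) (lam' : vert n m' -> 'I_k -> bool) :
  0 <= lik1 E' p' lam' -> lik1 E' p' lam' <= lik1 E p lam ->
  (cost1 E p lam <= cost1 E' p' lam')%E.
Proof.
rewrite /cost1 /= => lik'_ge0 lik_le.
case: (boolP (lik1 E' p' lam' == 0%R)) => [_|lik'_neq0]; first by rewrite leey.
have lik'_gt0 : 0 < lik1 E' p' lam' by rewrite lt_neqAle eq_sym lik'_neq0.
by rewrite !gt_eqF ?(lt_le_trans lik'_gt0) // lee_fin lerN2 ler_log2.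
Qed.

Lemma cost2_profile_lik (R : realType) n m k (E : rel (vert n m)) (lam : vert n m -> 'I_k -> bool) :
  (0 < k)%N -> cost2 R E lam = - (k%:R^-1 * log2 (profile_lik (freq R k) E lam)).
Proof.
move=> k_gt0; rewrite /profile_lik log2_prod => [|e _]; last exact: edge_lik_freq_gt0.
rewrite mulr_sumr -sumrN; apply: eq_bigr => e _.
by rewrite Hbin_freq ?hdist_le.
Qed.

Theorem proposition1 (R : realType) (n k : nat) (mu : 'I_n -> 'I_k -> bool)
    (hn : (0 < n)%N) (hk : (0 < k)%N) :
  (* Version 1 *)
  (exists (m : nat) (E : rel (vert n m)) (p : vert n m * vert n m -> R)
          (f : {ffun 'I_n -> bool} -> {ffun 'I_m -> bool}),
      [/\ leaf_labelled_tree E, valid_p E p &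
       forall (m' : nat) (E' : rel (vert n m')) (p' : vert n m' * vert n m' -> R)
              (lam' : vert n m' -> 'I_k -> bool),
         leaf_labelled_tree E' -> valid_p E' p' -> extends mu lam' ->
         (cost1 E p (ext mu f) <= cost1 E' p' lam')%E])
  /\
  (* Version 2 *)
  (exists (m : nat) (E : rel (vert n m))
          (f : {ffun 'I_n -> bool} -> {ffun 'I_m -> bool}),
      leaf_labelled_tree E /\
       forall (m' : nat) (E' : rel (vert n m')) (lam' : vert n m' -> 'I_k -> bool),
         leaf_labelled_tree E' -> extends mu lam' ->
         cost2 R E (ext mu f) <= cost2 R E' lam').
Proof.
have half_unit (p : R) : 0 <= p <= 2^-1 -> 0 <= p <= 1.
  by case/andP=> p_ge0 p_le; rewrite p_ge0 (le_trans p_le) // invf_le1 ?ler1n.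
split.
- have [m [E [f [tree f_max]]]] := ext_maximises_lik1 mu
    (q := capped_freq R k) (P := fun p => 0 <= p <= 2^-1) hn
    (fun d _ => capped_freq_range R hk d) half_unit (edge_lik_le_capped_freq hk)
    (edge_lik_capped_freq_gt0 R hk).
  exists m, E, (fun e => capped_freq R k (hdist (ext mu f) e.1 e.2)), f.
  split=> // [e _|m' E' p' lam' tree' p'_valid lam'_mu]; first exact: capped_freq_range.
  apply: le_cost1; first by apply: lik1_ge0 => e /p'_valid /half_unit.
  exact: f_max.
- have [m [E [f [tree f_max]]]] := ext_maximises_lik1 mu
    (q := freq R k) (P := fun p => 0 <= p <= 1) hn
    (freq_range R hk) (fun p => id) (edge_lik_le_freq hk)
    (edge_lik_freq_gt0 R hk).
  exists m, E, f; split=> // m' E' lam' tree' lam'_mu.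
  rewrite !cost2_profile_lik // lerN2 ler_pM2l ?invr_gt0 ?ltr0n //.
  apply: ler_log2; first by apply: profile_lik_gt0; exact: edge_lik_freq_gt0.
  by apply: f_max => // e _; apply: freq_range; rewrite ?hdist_le.
Qed.
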